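(* Assume $\mathcal F\cap\operatorname{relint}\mathcal X\neq\emptyset$ and realizability: $\mu^E\in\mathsf{RL}_{\mathcal F}(r^E)$ for some $r^E\in\mathbb R^{nm}$. Then $$\mathsf{IRL}_{\mathcal F}(\mu^E)=\partial f(\mu^E)+\mathcal U+\mathcal C(\mu^E)+\mathcal E(\mu^E).$$
   Context: Standing setup: $\mathcal S=\{s_1,\dots,s_n\}$, $\mathcal A=\{a_1,\dots,a_m\}$ finite, $m>1$; vectors in $\mathbb R^{nm}$ are functions on $\mathcal S\times\mathcal A$. $P$ transition law, $\nu_0\in\Delta_{\mathcal S}$, $\gamma\in(0,1)$, $\Psi=[\Psi_1,\dots,\Psi_k]$, $b\in\mathbb R^k$, $E=[I_n,\dots,I_n]^\top$. $\mathcal M=\{\mu\ge0:(E-\gamma P)^\top\mu=(1-\gamma)\nu_0\}$, $\mathcal F=\{\mu\in\mathcal M:\Psi^\top\mu\le b\}$. $\mathcal X$ closed convex, $\Delta_{\mathcal S\times\mathcal A}\subseteq\mathcal X$, $f:\mathcal X\to\mathbb R$ continuous convex, $\partial f(\mu)=\{g: f(\tilde\mu)\ge f(\mu)+g^\top(\tilde\mu-\mu)\ \forall\tilde\mu\in\mathcal X\}$. $\mathsf{RL}_{\mathcal F}(r)=\arg\max_{\mu\in\mathcal F}r^\top\mu-f(\mu)$; $\mathsf{IRL}_{\mathcal F}(\hat\mu)=\arg\min_{r\in\mathbb R^{nm}}\max_{\mu\in\mathcal F}r^\top(\mu-\hat\mu)-f(\mu)$. $\mathcal U=\operatorname{span}(E-\gamma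 P)$; $\mathcal C(\mu)=\operatorname{cone}\{\Psi_i:\Psi_i^\top\mu=b_i\}$; $\mathcal E(\mu)=\operatorname{cone}\{-e_{s,a}:\mu(s,a)=0\}$ with $e_{s,a}$ standard unit vectors; cone of empty family is $\{0\}$. *)

From HB Require Import structures.
From mathcomp Require Import all_boot all_order all_algebra.
From mathcomp Require Import boolp classical_sets reals.
Set Implicit Arguments. Unset Strict Implicit. Unset Printing Implicit Defensive.
Import Order.TTheory GRing.Theory Num.Theory.
Local Open Scope ring_scope.
Local Open Scope classical_set_scope.

(* States S = 'I_n, actions A = 'I_m; vectors of R^{nm} are functions on S x A. *)
Definition vec (R : Type) (n m : nat) := 'I_n * 'I_m -> R.

Section MDP.
Variables (R : realType) (n m k : nat).
Local Notation vec := (vec R n m).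

Definition dot (r mu : vec) : R := \sum_(p : 'I_n * 'I_m) r p * mu p.
Definition vsub (x y : vec) : vec := fun p => x p - y p.

Definition simplexS (nu : 'I_n -> R) : Prop :=
  (forall s, 0 <= nu s) /\ \sum_(s : 'I_n) nu s = 1.
Definition simplexSA : set vec :=
  [set mu | (forall p, 0 <= mu p) /\ \sum_(p : 'I_n * 'I_m) mu p = 1].

(* transition law: P p s' = P(s' | s, a) for p = (s, a) *)
Definition transition_law (P : 'I_n * 'I_m -> 'I_n -> R) : Prop :=
  forall p, simplexS (P p).

(* entries of the nm x n matrix E - gamma P, E = [I_n, ..., I_n]^T *)
Definition EmgP (P : 'I_n * 'I_m -> 'I_n -> R) (gamma : R)
  (p : 'I_n * 'I_m) (s' : 'I_n) : R := (p.1 == s')%:R - gamma * P p s'.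

Definition occM P gamma (nu0 : 'I_n -> R) : set vec :=
  [set mu | (forall p, 0 <= mu p) /\
     forall s', \sum_(p : 'I_n * 'I_m) EmgP P gamma p s' * mu p = (1 - gamma) * nu0 s'].

Definition feasF P gamma nu0 (Psi : 'I_k -> vec) (b : 'I_k -> R) : set vec :=
  [set mu | occM P gamma nu0 mu /\ forall i, dot (Psi i) mu <= b i].

(* geometry on R^{nm} (sup-norm balls; all norms are equivalent) *)
Definition near_le (x y : vec) (e : R) : Prop := forall p, `|x p - y p| < e.

Definition closed_set (X : set vec) : Prop :=
  forall x, (forall e, 0 < e -> exists2 y, X y & near_le y x e) -> X x.
Definition convex_set (X : set vec) : Prop :=
  forall x y t, X x -> X y -> 0 <= t -> t <= 1 ->
    X (fun p => t * x p + (1 - t) * y p).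
Definition convex_on (X : set vec) (f : vec -> R) : Prop :=
  forall x y t, X x -> X y -> 0 <= t -> t <= 1 ->
    f (fun p => t * x p + (1 - t) * y p) <= t * f x + (1 - t) * f y.
Definition continuous_on (X : set vec) (f : vec -> R) : Prop :=
  forall x e, X x -> 0 < e -> exists2 d, 0 < d &
    forall y, X y -> near_le y x d -> `|f y - f x| < e.

Definition aff_hull (X : set vec) : set vec :=
  [set x | exists (N : nat) (xs : 'I_N -> vec) (w : 'I_N -> R),
     (forall j, X (xs j)) /\ \sum_(j < N) w j = 1 /\
     x = (fun p => \sum_(j < N) w j * xs j p)].
Definition relint (X : set vec) : set vec :=
  [set x | X x /\ exists2 e, 0 < e &
     forall y, aff_hull X y -> near_le y x e -> X y].

Definition subdiff (X : set vec) (f : vec -> R) (mu : vec) : set vec :=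
  [set g | forall mt, X mt -> f mt >= f mu + dot g (vsub mt mu)].

Definition RL (F : set vec) (f : vec -> R) (r : vec) : set vec :=
  [set mu | F mu /\ forall mu', F mu' -> dot r mu' - f mu' <= dot r mu - f mu].

Definition irl_obj (F : set vec) (f : vec -> R) (muhat r : vec) : R :=
  sup [set dot r (vsub mu muhat) - f mu | mu in F].
Definition IRL (F : set vec) (f : vec -> R) (muhat : vec) : set vec :=
  [set r | forall r', irl_obj F f muhat r <= irl_obj F f muhat r'].

Definition Uspan P gamma : set vec :=
  [set r | exists v : 'I_n -> R,
     r = (fun p => \sum_(s' < n) EmgP P gamma p s' * v s')].

(* cone generated by the family {v i : Q i}; the empty family gives {0} *)
Definition cone_of (I : finType) (Q : I -> Prop) (v : I -> vec) : set vec :=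
  [set x | exists lam : I -> R, (forall i, 0 <= lam i) /\
     (forall i, ~ Q i -> lam i = 0) /\
     x = (fun p => \sum_(i : I) lam i * v i p)].

Definition unit_vec (q : 'I_n * 'I_m) : vec := fun p => (p == q)%:R.

Definition Ccone (Psi : 'I_k -> vec) (b : 'I_k -> R) (mu : vec) : set vec :=
  cone_of (fun i => dot (Psi i) mu = b i) Psi.
Definition Econe (mu : vec) : set vec :=
  cone_of (fun q => mu q = 0) (fun q p => - unit_vec q p).

Definition msum4 (A B C D : set vec) : set vec :=
  [set x | exists a b c d, A a /\ B b /\ C c /\ D d /\
     x = (fun p => a p + b p + c p + d p)].
End MDP.

From Pilot Require Import Defs.
From HB Require Import structures.
From mathcomp Require Import all_boot all_order all_algebra.
From mathcomp Require Import boolp classical_sets reals.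
From mathcomp Require Import ring lra.
Import Order.TTheory GRing.Theory Num.Theory.
Local Open Scope ring_scope.
Local Open Scope classical_set_scope.
Set Implicit Arguments. Unset Strict Implicit. Unset Printing Implicit Defensive.

(* The IRL objective at a reward [r] is the supremum over [mu] in [F] of
   [r . (mu - muE) - f mu].  Taking [mu = muE] shows that it is always at least
   [- f muE], with equality exactly when [muE] is optimal for [r], i.e. when
   [muE \in RL_F(r)].  Realizability makes this lower value attained, so
   [IRL_F(muE)] is the set of rewards for which [muE] is optimal (section
   InverseRL).  It remains to characterize those rewards as
   [\partial f(muE) + U + C(muE) + E(muE)] (section OptimalRewards):
   - sufficiency is a direct computation: the subgradient controls [f], [U] is
     orthogonal to differences of occupancy measures, and the cones [C] and [E]
     are nonpositive on feasible differences;
   - necessity is the KKT theorem.  Under Slater's condition a finite-dimensional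
     Hahn-Banach argument applied to difference quotients of [f - r . _] yields a
     Lagrange multiplier that is nonnegative on the feasible directions at [muE]
     (section LagrangeMultiplier); these contain the cone cut out by the
     linearized active constraints, and Farkas' lemma writes the multiplier as
     an element of [U + C(muE) + E(muE)]. *)

Section VectorAlgebra.
Variables (R : realType) (n m : nat).
Local Notation vec := (vec R n m).
Local Notation dot := (@dot R n m).

Lemma mem_ext (A : set vec) (x y : vec) : A x -> (forall p, x p = y p) -> A y.
Proof. by move=> Ax /funext <-. Qed.

Lemma dot_lincombr (a x y : vec) (u v : R) :
  dot a (fun p => u * x p + v * y p) = u * dot a x + v * dot a y.
Proof. by rewrite /Defs.dot !mulr_sumr -big_split /=; apply: eq_bigr => p _; ring. Qed.

Lemma dotDr (a x y : vec) : dot a (fun p => x p + y p) = dot a x + dot a y.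
Proof. by rewrite /Defs.dot -big_split /=; apply: eq_bigr => p _; ring. Qed.

Lemma dotBr (a x y : vec) : dot a (fun p => x p - y p) = dot a x - dot a y.
Proof. by rewrite /Defs.dot -sumrB /=; apply: eq_bigr => p _; ring. Qed.

Lemma dotZr (a x : vec) (u : R) : dot a (fun p => u * x p) = u * dot a x.
Proof. by rewrite /Defs.dot mulr_sumr; apply: eq_bigr => p _; ring. Qed.

Lemma dotNr (a x : vec) : dot a (fun p => - x p) = - dot a x.
Proof. by rewrite /Defs.dot -sumrN; apply: eq_bigr => p _; ring. Qed.

Lemma dotDl (a c x : vec) : dot (fun p => a p + c p) x = dot a x + dot c x.
Proof. by rewrite /Defs.dot -big_split /=; apply: eq_bigr => p _; ring. Qed.

Lemma dotZl (a x : vec) (u : R) : dot (fun p => u * a p) x = u * dot a x.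
Proof. by rewrite /Defs.dot mulr_sumr; apply: eq_bigr => p _; ring. Qed.

Lemma dotBl (a c x : vec) : dot (fun p => a p - c p) x = dot a x - dot c x.
Proof. by rewrite /Defs.dot -sumrB /=; apply: eq_bigr => p _; ring. Qed.

Lemma dotNl (a x : vec) : dot (fun p => - a p) x = - dot a x.
Proof. by rewrite /Defs.dot -sumrN; apply: eq_bigr => p _; ring. Qed.

Lemma dot_addZr (a x y : vec) (u : R) :
  dot a (fun p => x p + u * y p) = dot a x + u * dot a y.
Proof. by rewrite /Defs.dot mulr_sumr -big_split /=; apply: eq_bigr => p _; ring. Qed.

Lemma dot_subZl (a c x : vec) (u : R) :
  dot (fun p => a p - u * c p) x = dot a x - u * dot c x.
Proof. by rewrite /Defs.dot mulr_sumr -sumrB /=; apply: eq_bigr => p _; ring. Qed.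

Lemma dot_subZr (a x y : vec) (u : R) :
  dot a (fun p => x p - u * y p) = dot a x - u * dot a y.
Proof. by rewrite /Defs.dot mulr_sumr -sumrB /=; apply: eq_bigr => p _; ring. Qed.

Lemma dot_suml (I : finType) (G : I -> vec) (x : vec) :
  dot (fun p => \sum_i G i p) x = \sum_i dot (G i) x.
Proof.
rewrite /Defs.dot (eq_bigr (fun p => \sum_i G i p * x p)); last first.
  by move=> p _; rewrite mulr_suml.
by rewrite exchange_big.
Qed.

Lemma dot_unit (x : vec) q : dot (@unit_vec R n m q) x = x q.
Proof.
rewrite /Defs.dot (bigD1 q) //= /unit_vec eqxx mul1r big1 ?addr0 // => p /negbTE ->.
by rewrite mul0r.
Qed.

Lemma dot_self_le0 (c : vec) : dot c c <= 0 -> forall p, c p = 0.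
Proof.
move=> Hc p; have sq_ge0 q : 0 <= c q * c q by rewrite -expr2 sqr_ge0.
have Hc0 : dot c c = 0 by apply/eqP; rewrite eq_le Hc sumr_ge0.
have /eqP := psumr_eq0P (fun q _ => sq_ge0 q) Hc0 (i := p) isT.
by rewrite mulf_eq0 orbb => /eqP.
Qed.

End VectorAlgebra.

Section Farkas.
Variables (R : realType) (n m : nat).
Local Notation vec := (vec R n m).
Local Notation dot := (@dot R n m).

(* [eliminate gj x0 h] removes from [h] a multiple of [gj] so that the result
   vanishes at [x0]; this is the Fourier-Motzkin step of the Farkas lemma. *)
Definition eliminate (gj x0 h : vec) : vec :=
  fun p => h p - dot h x0 / dot gj x0 * gj p.

Lemma dot_eliminate (gj x0 h x : vec) : dot gj x0 != 0 ->
  dot (eliminate gj x0 h) x = dot h (fun p => x p - dot gj x / dot gj x0 * x0 p).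
Proof. by move=> gj0; rewrite dot_subZl dot_subZr; field. Qed.

Lemma eliminate_sum (I : finType) (gj x0 c : vec) (g : I -> vec) (mu : I -> R) :
  dot gj x0 != 0 ->
  (forall p, eliminate gj x0 c p = \sum_i mu i * eliminate gj x0 (g i) p) ->
  forall p, c p = (dot c x0 - \sum_i mu i * dot (g i) x0) / dot gj x0 * gj p
                  + \sum_i mu i * g i p.
Proof.
move=> gj0 Hmu p; have := Hmu p; rewrite /eliminate.
have -> : \sum_i mu i * (g i p - dot (g i) x0 / dot gj x0 * gj p) =
    \sum_i mu i * g i p - (\sum_i mu i * dot (g i) x0) / dot gj x0 * gj p.
  by rewrite !mulr_suml -sumrB; apply: eq_bigr => i _; ring.
move=> Hp; rewrite -[c p](subrK (dot c x0 / dot gj x0 * gj p)) Hp; ring.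
Qed.

Lemma farkas_seq (I : finType) (s : seq I) : uniq s -> forall (g : I -> vec) (c : vec),
  (forall x, (forall i, i \in s -> 0 <= dot (g i) x) -> 0 <= dot c x) ->
  exists lam : I -> R, [/\ forall i, 0 <= lam i, forall i, i \notin s -> lam i = 0
    & forall p, c p = \sum_i lam i * g i p].
Proof.
elim: s => [|j s IH] /= Hu g c Hc.
  have c0 : forall p, c p = 0.
    apply: dot_self_le0; have := Hc (fun p => - c p) (fun i => ltac:(by rewrite in_nil)).
    by rewrite dotNr oppr_ge0.
  by exists (fun _ => 0); split => // p; rewrite c0 big1 // => i _; rewrite mul0r.
move/andP: Hu => [Hj Hu].
case: (pselect (forall x, (forall i, i \in s -> 0 <= dot (g i) x) -> 0 <= dot c x)) => Hs.
  have [lam [lam0 lamS Hlam]] := IH Hu g c Hs.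
  by exists lam; split => // i; rewrite in_cons negb_or => /andP [] _ /lamS.
have [x0 /not_implyP [Hx0 /negP]] := (existsNP _).2 Hs; rewrite -ltNge => cx0.
set g0 := dot (g j) x0.
have g0_lt0 : g0 < 0.
  rewrite ltNge; apply/negP => g0_ge0; move: cx0; rewrite ltNge => /negP; apply.
  by apply: Hc => i; rewrite in_cons => /orP [/eqP -> //|]; exact: Hx0.
have g0_neq0 : g0 != 0 by rewrite lt_eqF.
pose g' i := eliminate (g j) x0 (g i).
have Hs' : forall x, (forall i, i \in s -> 0 <= dot (g' i) x) ->
    0 <= dot (eliminate (g j) x0 c) x.
  move=> x Hx; rewrite dot_eliminate //; apply: Hc => i.
  rewrite in_cons => /orP [/eqP -> | Hi]; last by rewrite -dot_eliminate //; exact: Hx.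
  by rewrite dot_subZr -/g0 divfK // subrr.
have [mu [mu0 muS Hmu]] := IH Hu g' _ Hs'.
have muj : mu j = 0 by apply: muS.
pose th := (dot c x0 - \sum_i mu i * dot (g i) x0) / g0.
exists (fun i => if i == j then th else mu i); split.
- move=> i; case: ifP => // _; rewrite /th -mulrNN mulr_ge0 // ?oppr_ge0 ?invr_le0 ?ltW //.
  rewrite subr_lt0 (lt_le_trans cx0) // sumr_ge0 // => i0 _.
  by case: (boolP (i0 \in s)) => [/Hx0 gi|/muS ->]; rewrite ?mul0r // mulr_ge0.
- by move=> i; rewrite in_cons negb_or => /andP [/negbTE -> /muS].
- move=> p.
  have -> : \sum_i (if i == j then th else mu i) * g i p = th * g j p + \sum_i mu i * g i p.
    rewrite (bigD1 j) //= eqxx [in RHS](bigD1 j) //= muj mul0r add0r.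
    by congr (_ + _); apply: eq_bigr => i /negbTE ->.
  exact: eliminate_sum g0_neq0 Hmu p.
Qed.

Lemma farkas_cone (I : finType) (Q : I -> Prop) (g : I -> vec) (c : vec) :
  (forall x, (forall i, Q i -> dot (g i) x <= 0) -> dot c x <= 0) -> cone_of Q g c.
Proof.
move=> Hc; pose s := [seq i <- enum I | `[< Q i >]].
have memS i : (i \in s) = `[< Q i >] by rewrite mem_filter mem_enum andbT.
have [lam [lam0 lamS Hlam]] : exists lam : I -> R, [/\ forall i, 0 <= lam i,
    forall i, i \notin s -> lam i = 0 & forall p, c p = \sum_i lam i * g i p].
  apply: farkas_seq; first by rewrite filter_uniq ?enum_uniq.
  move=> x Hx; rewrite -oppr_le0 -dotNr; apply: Hc => i /asboolP; rewrite -memS.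
  by move=> /Hx; rewrite dotNr oppr_le0.
exists lam; split => //; split; last exact/funext.
by move=> i Qi; apply: lamS; rewrite memS; apply/asboolP.
Qed.

End Farkas.

Lemma separating_real (R : realType) (A B : set R) :
  A !=set0 -> B !=set0 -> (forall a b, A a -> B b -> a <= b) ->
  exists c, (forall a, A a -> a <= c) /\ (forall b, B b -> c <= b).
Proof.
move=> [a0 Aa0] [b0 Bb0] AB; exists (sup A); split.
  by apply: ub_le_sup; exists b0 => a Aa; exact: AB.
by move=> b Bb; apply: ge_sup; [exists a0 | move=> a Aa; exact: AB].
Qed.

(* The relation [V d v] reads
   "[v] is an admissible upper value at the direction [d]" for a sublinear
   functional that need not be given by a formula; the conclusion is a linear
   functional below every admissible value. *)
Section DominatedExtension.
Variables (R : realType) (n m : nat).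
Local Notation vec := (vec R n m).
Local Notation dot := (@dot R n m).
Variable V : vec -> R -> Prop.
Hypothesis V_add : forall d1 d2 v1 v2, V d1 v1 -> V d2 v2 ->
  exists2 v3, V (fun p => d1 p + d2 p) v3 & v3 <= v1 + v2.
Hypothesis V_scale : forall a d v, 0 < a -> V d v -> V (fun p => a * d p) (a * v).
Hypothesis V_zero : forall v, V (fun _ => 0) v -> 0 <= v.
Hypothesis V_total : forall d, exists v, V d v.

Lemma V_eq (d d' : vec) v : (forall p, d p = d' p) -> V d v -> V d' v.
Proof. by move=> /funext ->. Qed.

Definition dominated (lam : vec) (s : seq ('I_n * 'I_m)) : Prop :=
  forall d v, (forall p, p \notin s -> d p = 0) -> V d v -> dot lam d <= v.

Local Notation e := (@unit_vec R n m).

Lemma dominated_update lam q s c : dominated lam s ->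
  (forall y v, (forall p, p \notin s -> y p = 0) ->
     V (fun p => y p - e q p) v -> dot lam y - v <= c) ->
  (forall y v, (forall p, p \notin s -> y p = 0) ->
     V (fun p => y p + e q p) v -> c <= v - dot lam y) ->
  dominated (fun p => if p == q then c else lam p) (q :: s).
Proof.
move=> Hlam lower upper d v Hd Vdv.
pose y p := if p == q then 0 else d p.
have Hy p : p \notin s -> y p = 0.
  rewrite /y; case: eqP => // /eqP pq ps; apply: Hd.
  by rewrite in_cons negb_or pq.
have -> : dot (fun p => if p == q then c else lam p) d = dot lam y + c * d q.
  rewrite /Defs.dot (bigD1 q) //= [in RHS](bigD1 q) //= /y !eqxx mulr0 add0r addrC.
  by congr (_ + _); apply: eq_bigr => p /negbTE ->.
have Hscale u p : u * d p = u * y p + u * d q * e q p.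
  by rewrite /y /unit_vec; case: eqP => [->|_] /=; ring.
have Hys a p : p \notin s -> a * y p = 0 by move=> /Hy ->; rewrite mulr0.
have [dq_lt0|dq_gt0|dq0] := ltgtP (d q) 0.
- set a := - (d q)^-1.
  have a_gt0 : 0 < a by rewrite oppr_gt0 invr_lt0.
  have Va : V (fun p => a * y p - e q p) (a * v).
    apply: V_eq (V_scale a_gt0 Vdv) => p.
    have adq : a * d q = -1 by rewrite /a mulNr mulVf ?lt_eqF.
    by rewrite Hscale adq mulN1r.
  have := lower _ _ (Hys a) Va; rewrite dotZr => H.
  have := ler_wpM2l (ltW (ltac:(by rewrite oppr_gt0) : 0 < - d q)) H.
  have -> : - d q * (a * dot lam y - a * v) = dot lam y - v.
    by rewrite /a; field; rewrite lt_eqF.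
  lra.
- set a := (d q)^-1.
  have a_gt0 : 0 < a by rewrite invr_gt0.
  have Va : V (fun p => a * y p + e q p) (a * v).
    apply: V_eq (V_scale a_gt0 Vdv) => p.
    by rewrite Hscale /a mulVf ?gt_eqF // mul1r.
  have := upper _ _ (Hys a) Va; rewrite dotZr => H.
  have := ler_wpM2l (ltW dq_gt0) H.
  have -> : d q * (a * v - a * dot lam y) = v - dot lam y.
    by rewrite /a; field; rewrite gt_eqF.
  lra.
- rewrite dq0 mulr0 addr0; apply: Hlam Hy _.
  by apply: V_eq Vdv => p; rewrite /y; case: eqP => // ->.
Qed.

(* One more coordinate: a dominated functional on the support [s] extends to
   the support [q :: s], the new coordinate being chosen by completeness. *)
Lemma dominated_cons lam q s : dominated lam s -> exists lam', dominated lam' (q :: s).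
Proof.
move=> Hlam.
pose supp (y : vec) : Prop := forall p, p \notin s -> y p = 0.
pose A := [set a | exists y v, [/\ supp y, V (fun p => y p - e q p) v & a = dot lam y - v]].
pose B := [set b | exists y v, [/\ supp y, V (fun p => y p + e q p) v & b = v - dot lam y]].
have AB a b : A a -> B b -> a <= b.
  move=> [y [v [Hy Vy ->]]] [y' [v' [Hy' Vy' ->]]].
  have [v3 V3 Hv3] := V_add Vy Vy'.
  have Hyy' : dot lam (fun p => y p + y' p) <= v3.
    apply: Hlam; first by move=> p Hp; rewrite Hy ?Hy' ?addr0.
    by apply: V_eq V3 => p; ring.
  rewrite dotDr in Hyy'; lra.
have A0 : A !=set0.
  have [v Hv] := V_total (fun p => 0 - e q p).
  by exists (dot lam (fun _ => 0) - v), (fun _ => 0), v.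
have B0 : B !=set0.
  have [v Hv] := V_total (fun p => 0 + e q p).
  by exists (v - dot lam (fun _ => 0)), (fun _ => 0), v.
have [c [Ac Bc]] := separating_real A0 B0 AB.
exists (fun p => if p == q then c else lam p); apply: dominated_update => // y v Hy Vy.
  by apply: Ac; exists y, v.
by apply: Bc; exists y, v.
Qed.

Theorem dominated_extension : exists lam : vec, forall d v, V d v -> dot lam d <= v.
Proof.
suff [lam Hlam] : exists lam, dominated lam (enum [set: 'I_n * 'I_m]).
  by exists lam => d v; apply: Hlam => p; rewrite mem_enum in_setT.
elim: (enum _) => [|q s [lam Hlam]]; last exact: dominated_cons Hlam.
exists (fun _ => 0) => d v Hd Vdv; rewrite /Defs.dot big1 => [|p _]; last by rewrite mul0r.
by apply: V_zero; apply: V_eq Vdv => p; exact: Hd.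
Qed.
End DominatedExtension.

Definition feasible_dir (R : realType) (n m : nat) (F : set (vec R n m))
    (mu d : vec R n m) : Prop :=
  exists2 s, 0 < s & F (fun p => mu p + s * d p).

Section FeasibleDirections.
Variables (R : realType) (n m : nat) (F : set (vec R n m)) (mu : vec R n m).
Hypotheses (HFv : convex_set F) (HF : F mu).
Local Notation Kc := (feasible_dir F mu).

Lemma feasible_shrink d s t : F (fun p => mu p + s * d p) -> 0 < t -> t <= s ->
  F (fun p => mu p + t * d p).
Proof.
move=> Fs t0 ts; have s0 : 0 < s by exact: lt_le_trans ts.
have w0 : 0 <= t / s by rewrite divr_ge0 ?ltW.
have w1 : t / s <= 1 by rewrite ler_pdivrMr // mul1r.
apply: (mem_ext (HFv Fs HF w0 w1)) => p; field; by rewrite gt_eqF.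
Qed.

Lemma feasible_dir0 : Kc (fun _ => 0).
Proof. by exists 1 => //; apply: (mem_ext HF) => p; rewrite mulr0 addr0. Qed.

Lemma feasible_dirD a c : Kc a -> Kc c -> Kc (fun p => a p + c p).
Proof.
move=> [s1 s10 F1] [s2 s20 F2]; have s12 : 0 < s1 + s2 by rewrite addr_gt0.
exists (s1 * s2 / (s1 + s2)); first by rewrite divr_gt0 // mulr_gt0.
have w0 : 0 <= s2 / (s1 + s2) by rewrite divr_ge0 ?ltW.
have w1 : s2 / (s1 + s2) <= 1 by rewrite ler_pdivrMr // mul1r lerDr ltW.
apply: (mem_ext (HFv F1 F2 w0 w1)) => p; field; by rewrite gt_eqF.
Qed.

Lemma feasible_dirZ u a : 0 < u -> Kc a -> Kc (fun p => u * a p).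
Proof.
move=> u0 [s s0 Fs]; exists (s / u); first by rewrite divr_gt0.
by apply: (mem_ext Fs) => p; field; rewrite gt_eqF.
Qed.

Lemma feasible_dir_sub y : F y -> Kc (fun p => y p - mu p).
Proof. by move=> Fy; exists 1 => //; apply: (mem_ext Fy) => p; ring. Qed.

End FeasibleDirections.

(* Affine hulls of sets containing the probability simplex: either the
   hyperplane [sum = 1] or the whole space. *)
Section AffineHull.
Variables (R : realType) (n m : nat) (X : set (vec R n m)).
Hypothesis HXD : @simplexSA R n m `<=` X.
Local Notation vec := (vec R n m).
Local Notation e := (@unit_vec R n m).

Lemma sum_enum (G : 'I_n * 'I_m -> R) :
  \sum_(p : 'I_n * 'I_m) G p = \sum_(j < #|{: 'I_n * 'I_m}|) G (enum_val j).
Proof. by rewrite -(big_enum_val G); apply: eq_bigl => p; rewrite inE. Qed.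

Lemma unit_simplex q : @simplexSA R n m (e q).
Proof.
split=> [p|]; first by rewrite /unit_vec ler0n.
by rewrite /unit_vec (bigD1 q) //= eqxx big1 ?addr0 // => p /negbTE ->.
Qed.

Lemma sum_unit (y : vec) p : \sum_q y q * e q p = y p.
Proof.
rewrite (bigD1 p) //= /unit_vec eqxx mulr1 big1 ?addr0 // => q qp.
by rewrite eq_sym (negbTE qp) mulr0.
Qed.

Lemma aff_hull_hyperplane y : \sum_p y p = 1 -> aff_hull X y.
Proof.
move=> Hy; exists #|{: 'I_n * 'I_m}|, (fun j => e (enum_val j)),
  (fun j => y (enum_val j)); split; first by move=> j; apply/HXD/unit_simplex.
split; first by rewrite -sum_enum.
by apply/funext => p; rewrite -(sum_enum (fun q => y q * e q p)) sum_unit.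
Qed.

Lemma aff_hull_full x1 : X x1 -> \sum_p x1 p != 1 -> forall y, aff_hull X y.
Proof.
move=> Xx1 Hx1 y; set N := #|{: 'I_n * 'I_m}|.
set be := (1 - \sum_p y p) / (1 - \sum_p x1 p).
have Hd : 1 - \sum_p x1 p != 0 by rewrite subr_eq0 eq_sym.
pose w q := y q - be * x1 q.
exists N.+1, (fun j : 'I_N.+1 => if unlift ord0 j is Some j' then e (enum_val j') else x1),
  (fun j : 'I_N.+1 => if unlift ord0 j is Some j' then w (enum_val j') else be).
split; first by move=> j; case: (unlift ord0 j) => [j'|] //; apply/HXD/unit_simplex.
split.
  rewrite big_ord_recl unlift_none (eq_bigr (fun j => w (enum_val j))) => [|j _];
    last by rewrite liftK.
  by rewrite -sum_enum /w sumrB -mulr_sumr /be; field.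
apply/funext => p; rewrite big_ord_recl unlift_none.
rewrite (eq_bigr (fun j => w (enum_val j) * e (enum_val j) p)) => [|j _];
  last by rewrite liftK.
rewrite -(sum_enum (fun q => w q * e q p)) sum_unit /w; ring.
Qed.

Lemma affine_projection (mu0 muE : vec) :
  \sum_p mu0 p = 1 -> \sum_p muE p = 1 -> exists pi : vec -> vec, [/\
    forall a c u v p, pi (fun q => u * a q + v * c q) p = u * pi a p + v * pi c p,
    forall x, X x -> forall p, pi (fun q => x q - muE q) p = x p - muE p &
    forall d, aff_hull X (fun p => mu0 p + pi d p)].
Proof.
move=> mu0_sum muE_sum.
(* If [X] leaves the hyperplane [sum = 1], the identity works; otherwise [pi]
   subtracts the mean of the coordinates. *)
have [Hhyp|/existsNP [x1 /not_implyP [Xx1 Hx1]]] :=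
  pselect (forall x, X x -> \sum_p x p = 1);
  last by exists id; split => // d; apply: (aff_hull_full Xx1); apply/eqP.
pose N : R := #|{: 'I_n * 'I_m}|%:R.
have N0 : N != 0.
  rewrite pnatr_eq0 -lt0n; apply/card_gt0P.
  case: (pickP (@predT ('I_n * 'I_m))) => [p _|H0]; first by exists p.
  have : \sum_p mu0 p = 0 by rewrite big1 // => p _; move: (H0 p).
  by rewrite mu0_sum => /eqP; rewrite oner_eq0.
exists (fun d p => d p - (\sum_q d q) / N); split.
- by move=> a c u v p; rewrite big_split /= -!mulr_sumr; field.
- by move=> x Xx p; rewrite sumrB Hhyp // muE_sum subrr mul0r subr0.
- move=> d; apply: aff_hull_hyperplane.
  by rewrite big_split /= mu0_sum sumrB sumr_const -mulr_natl -/N; field.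
Qed.

End AffineHull.

Section LagrangeMultiplier.
Variables (R : realType) (n m : nat) (X F : set (vec R n m)) (phi : vec R n m -> R).
Variable muE : vec R n m.
Hypotheses (HXv : convex_set X) (HFv : convex_set F) (HXD : @simplexSA R n m `<=` X)
  (HFS : F `<=` @simplexSA R n m) (Hphi : convex_on X phi) (HE : F muE)
  (Hmin : forall mu, F mu -> phi muE <= phi mu).
Local Notation vec := (vec R n m).
Local Notation dot := (@dot R n m).
Local Notation Kc := (feasible_dir F muE).

Lemma feas_sub_dom : F `<=` X.
Proof. by move=> mu /HFS /HXD. Qed.

(* Along a feasible direction, [phi] does not decrease from [muE], even past
   the feasible segment (by convexity of [phi] on [X]). *)
Lemma phi_feasible_dir kk t : Kc kk -> 0 < t -> X (fun p => muE p + t * kk p) ->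
  phi muE <= phi (fun p => muE p + t * kk p).
Proof.
move=> [s s0 Fs] t0 Xt; case: (leP t s) => [ts|st].
  exact/Hmin/(feasible_shrink HFv HE Fs t0 ts).
have w0 : 0 <= s / t by rewrite divr_ge0 ?ltW.
have w1 : s / t <= 1 by rewrite ler_pdivrMr // mul1r ltW.
have := Hphi Xt (feas_sub_dom HE) w0 w1.
have -> : (fun p => s / t * (muE p + t * kk p) + (1 - s / t) * muE p) =
    (fun p => muE p + s * kk p) by apply/funext => p; field; rewrite gt_eqF.
move: (Hmin Fs) => Hs Hc.
have : 0 <= s / t * (phi (fun p => muE p + t * kk p) - phi muE) by lra.
by rewrite pmulr_rge0 ?divr_gt0 // subr_ge0.
Qed.

(* It is a sublinear
   relation, bounding the directional derivative of [phi] restricted to [F]. *)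
Definition slope_bound (d : vec) (v : R) : Prop :=
  exists t kk x, [/\ 0 < t, Kc kk, X x,
    forall p, x p = muE p + t * (d p + kk p) & v = (phi x - phi muE) / t].

(* Sublinearity of [slope_bound]: subadditivity (by convexity of [X] and of
   [phi]), positive homogeneity, and nonnegativity at the zero direction (by
   optimality of [muE]). *)
Lemma slope_bound_add d1 d2 v1 v2 : slope_bound d1 v1 -> slope_bound d2 v2 ->
  exists2 v3, slope_bound (fun p => d1 p + d2 p) v3 & v3 <= v1 + v2.
Proof.
move=> [t1 [k1 [x1 [t10 K1 X1 E1 ->]]]] [t2 [k2 [x2 [t20 K2 X2 E2 ->]]]].
have t12 : 0 < t1 + t2 by rewrite addr_gt0.
set w := t2 / (t1 + t2); set tau := t1 * t2 / (t1 + t2).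
have w0 : 0 <= w by rewrite divr_ge0 ?ltW.
have w1 : w <= 1 by rewrite ler_pdivrMr // mul1r lerDr ltW.
have tau0 : 0 < tau by rewrite divr_gt0 // mulr_gt0.
set x3 := (fun p => w * x1 p + (1 - w) * x2 p).
exists ((phi x3 - phi muE) / tau).
  exists tau, (fun p => k1 p + k2 p), x3; split => //; first exact: feasible_dirD.
    exact: HXv.
  by move=> p; rewrite /x3 E1 E2 /w /tau; field; rewrite !gt_eqF.
have -> : (phi x1 - phi muE) / t1 + (phi x2 - phi muE) / t2 =
    (w * phi x1 + (1 - w) * phi x2 - phi muE) / tau.
  by rewrite /w /tau; field; rewrite !gt_eqF.
by rewrite ler_pM2r ?invr_gt0 // lerD2r; apply: Hphi.
Qed.

Lemma slope_bound_scale a d v : 0 < a -> slope_bound d v ->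
  slope_bound (fun p => a * d p) (a * v).
Proof.
move=> a0 [t [kk [x [t0 Kk Xx Ex ->]]]].
exists (t / a), (fun p => a * kk p), x; split; rewrite ?divr_gt0 //.
- exact: feasible_dirZ.
- by move=> p; rewrite Ex; field; rewrite !gt_eqF.
- by field; rewrite !gt_eqF.
Qed.

Lemma slope_bound_zero v : slope_bound (fun _ => 0) v -> 0 <= v.
Proof.
move=> [t [kk [x [t0 Kk Xx Ex ->]]]].
have Ex' : x = (fun p => muE p + t * kk p) by apply/funext => p; rewrite Ex add0r.
rewrite Ex' in Xx *; apply: divr_ge0; last exact: ltW.
by rewrite subr_ge0; apply: phi_feasible_dir.
Qed.

Section Projected.
Variables (pi : vec -> vec) (mu0 : vec) (eps : R).
Hypotheses
  (pi_lin : forall a c u v p, pi (fun q => u * a q + v * c q) p = u * pi a p + v * pi c p)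
  (pi_fix : forall x, X x -> forall p, pi (fun q => x q - muE q) p = x p - muE p)
  (pi_aff : forall d, aff_hull X (fun p => mu0 p + pi d p))
  (F0 : F mu0) (eps0 : 0 < eps)
  (Hball : forall y, aff_hull X y -> near_le y mu0 eps -> X y).

Lemma piD a c p : pi (fun q => a q + c q) p = pi a p + pi c p.
Proof.
have := pi_lin a c 1 1 p; rewrite !mul1r => <-.
by congr pi; apply/funext => q; rewrite !mul1r.
Qed.

Lemma piZ u a p : pi (fun q => u * a q) p = u * pi a p.
Proof.
have := pi_lin a a u 0 p; rewrite mul0r addr0 => <-.
by congr pi; apply/funext => q; rewrite mul0r addr0.
Qed.

Lemma pi0 p : pi (fun _ => 0) p = 0.
Proof.
rewrite -[RHS](mul0r (pi (fun _ => 0) p)) -piZ.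
by congr pi; apply/funext => q; rewrite mul0r.
Qed.

(* Feasible directions lie in the direction space, so [pi] fixes them. *)
Lemma pi_feasible kk : Kc kk -> forall p, pi kk p = kk p.
Proof.
move=> [s s0 Fs] p; have := pi_fix (feas_sub_dom Fs) p.
have -> : (fun q => muE q + s * kk q - muE q) = (fun q => s * kk q).
  by apply/funext => q; ring.
by rewrite piZ addrC addKr; apply: mulfI; rewrite gt_eqF.
Qed.

(* Every projected direction has a slope bound: a small step from the Slater
   point along it stays in [X]. *)
Lemma slope_bound_total d : exists v, slope_bound (pi d) v.
Proof.
set D := pi d; set S := \sum_p `|D p|.
have S0 : 0 <= S by apply: sumr_ge0.
set c := S / eps + 1.
have c0 : 0 < c by rewrite ltr_wpDl // divr_ge0 // ltW.
set x := fun p => mu0 p + c^-1 * D p.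
have Xx : X x.
  apply: Hball.
    by apply: (mem_ext (pi_aff (fun q => c^-1 * d q))) => p; rewrite piZ.
  move=> p; rewrite /x addrC addKr normrM gtr0_norm ?invr_gt0 //.
  apply: (@le_lt_trans _ _ (c^-1 * S)).
    by rewrite ler_pM2l ?invr_gt0 // /S (bigD1 p) //= lerDl sumr_ge0.
  by rewrite ltr_pdivrMl // /c mulrDl mul1r divfK ?gt_eqF // ltrDl.
exists ((phi x - phi muE) / c^-1), c^-1, (fun p => c * (mu0 p - muE p)), x.
split; rewrite ?invr_gt0 //; first by apply: feasible_dirZ => //; exact: feasible_dir_sub.
by move=> p; rewrite /x; field; rewrite gt_eqF.
Qed.

(* Hahn-Banach applied to [slope_bound] composed with [pi] gives the multiplier. *)
Lemma lagrange_projected : exists lam : vec,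
  (forall x, X x -> dot lam (fun p => x p - muE p) <= phi x - phi muE) /\
  (forall kk, Kc kk -> 0 <= dot lam kk).
Proof.
have [lam Hlam] : exists lam : vec, forall d v, slope_bound (pi d) v -> dot lam d <= v.
  apply: dominated_extension; last exact: slope_bound_total.
  - move=> d1 d2 v1 v2 /slope_bound_add H /H [v3 V3 Hv3]; exists v3 => //.
    by apply: V_eq V3 => p; rewrite piD.
  - by move=> a d v a0 /(slope_bound_scale a0) Vdv; apply: V_eq Vdv => p; rewrite piZ.
  - by move=> v Vv; apply: slope_bound_zero; apply: V_eq Vv => p; rewrite pi0.
exists lam; split.
  move=> x Xx; rewrite -[leRHS]divr1; apply: Hlam.
  exists 1, (fun _ => 0), x; split => //; first exact: feasible_dir0.
  by move=> p; rewrite pi_fix // addr0 mul1r addrC subrK.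
move=> kk Kk; have := Hlam (fun p => -1 * kk p) 0.
rewrite dotZr mulN1r oppr_le0; apply.
exists 1, kk, muE; split => //; first exact: feas_sub_dom.
  by move=> p; rewrite piZ pi_feasible //; ring.
by rewrite subrr mul0r.
Qed.

End Projected.

Theorem lagrange_multiplier : (exists mu0, F mu0 /\ relint X mu0) -> exists lam : vec,
  (forall x, X x -> dot lam (fun p => x p - muE p) <= phi x - phi muE) /\
  (forall kk, Kc kk -> 0 <= dot lam kk).
Proof.
move=> [mu0 [F0 [_ [eps eps0 Hball]]]].
have [pi [pi_lin pi_fix pi_aff]] := affine_projection HXD (HFS F0).2 (HFS HE).2.
exact: lagrange_projected pi_lin pi_fix pi_aff F0 eps0 Hball.
Qed.

End LagrangeMultiplier.

Lemma small_step_fin (R : realType) (I : finType) (Q : I -> R -> Prop) :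
  (forall i, exists2 s0, 0 < s0 & forall s, 0 < s -> s <= s0 -> Q i s) ->
  exists2 s, 0 < s & forall i, Q i s.
Proof.
move=> HQ; suff [s0 s00 Hs] : exists2 s0, 0 < s0 &
    forall s, 0 < s -> s <= s0 -> forall i, i \in enum I -> Q i s.
  by exists s0 => // i; apply: Hs; rewrite ?mem_enum.
elim: (enum I) => [|i l [s1 s10 H1]]; first by exists 1.
have [s2 s20 H2] := HQ i; exists (Num.min s1 s2); first by rewrite lt_min s10 s20.
move=> s s0; rewrite le_min => /andP [h1 h2] j; rewrite in_cons => /orP [/eqP -> | jl].
  exact: H2.
exact: H1.
Qed.

Lemma small_step_lin (R : realType) (a c : R) : 0 < a ->
  exists2 s0, 0 < s0 & forall s, 0 < s -> s <= s0 -> s * c <= a.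
Proof.
move=> a0; have c1 : 0 < `|c| + 1 by rewrite ltr_wpDl.
exists (a / (`|c| + 1)) => [|s s0 hs]; first by rewrite divr_gt0.
apply: (le_trans (ler_wpM2l (ltW s0) (ler_norm c))).
apply: (le_trans (ler_wpM2r (normr_ge0 c) hs)).
by rewrite mulrAC ler_pdivrMr // ler_wpM2l ?(ltW a0) // lerDl.
Qed.

Definition sum_case (A B T : Type) (f : A -> T) (g : B -> T) (i : A + B) : T :=
  match i with inl a => f a | inr b => g b end.

Section Cones.
Variables (R : realType) (n m : nat).
Local Notation vec := (vec R n m).
Local Notation dot := (@dot R n m).

Lemma cone_of_sum (I J : finType) (QI : I -> Prop) (QJ : J -> Prop)
    (gI : I -> vec) (gJ : J -> vec) (x : vec) :
  cone_of (sum_case QI QJ) (sum_case gI gJ) x ->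
  exists y z, [/\ cone_of QI gI y, cone_of QJ gJ z & x = (fun p => y p + z p)].
Proof.
move=> [lam [lam0 [lamQ ->]]].
exists (fun p => \sum_i lam (inl i) * gI i p), (fun p => \sum_j lam (inr j) * gJ j p).
split; last by apply/funext => p; rewrite big_sumType.
  by exists (fun i => lam (inl i)); split => //; split => // i /(lamQ (inl i)).
by exists (fun j => lam (inr j)); split => //; split => // j /(lamQ (inr j)).
Qed.

Lemma cone_of_nonpos (I : finType) (Q : I -> Prop) (g : I -> vec) (x d : vec) :
  cone_of Q g x -> (forall i, Q i -> dot (g i) d <= 0) -> dot x d <= 0.
Proof.
move=> [lam [lam0 [lamQ ->]]] Hg; rewrite dot_suml sumr_le0 // => i _.
rewrite dotZl; case: (pselect (Q i)) => [/Hg|/lamQ ->]; last by rewrite mul0r.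
exact: mulr_ge0_le0.
Qed.

End Cones.

Section OccupancyPolytope.
Variables (R : realType) (n m k : nat) (P : 'I_n * 'I_m -> 'I_n -> R)
  (nu0 : 'I_n -> R) (gamma : R) (Psi : 'I_k -> vec R n m) (b : 'I_k -> R).
Hypotheses (HP : transition_law P) (Hnu0 : simplexS nu0) (Hgamma1 : gamma < 1).
Local Notation vec := (vec R n m).
Local Notation dot := (@dot R n m).
Local Notation F := (feasF P gamma nu0 Psi b).

Definition flow_col (s' : 'I_n) : vec := fun p => EmgP P gamma p s'.

Lemma EmgP_row_sum p : \sum_(s' : 'I_n) EmgP P gamma p s' = 1 - gamma.
Proof.
rewrite /EmgP sumrB -mulr_sumr (HP p).2 mulr1 (bigD1 p.1) //= eqxx big1 ?addr0 //.
by move=> s' sp; rewrite eq_sym (negbTE sp).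
Qed.

Lemma occM_sum mu : occM P gamma nu0 mu -> \sum_p mu p = 1.
Proof.
move=> [_ Hflow].
have : \sum_(s' : 'I_n) \sum_p EmgP P gamma p s' * mu p = (1 - gamma) * \sum_s' nu0 s'.
  by rewrite mulr_sumr; apply: eq_bigr => s' _; exact: Hflow.
rewrite exchange_big Hnu0.2 mulr1 /= => Hsum.
apply: (@mulfI _ (1 - gamma)); first by rewrite subr_eq0 gt_eqF.
rewrite mulr1 -[RHS]Hsum mulr_sumr; apply: eq_bigr => p _.
by rewrite -mulr_suml EmgP_row_sum.
Qed.

Lemma feasF_simplex : F `<=` @simplexSA R n m.
Proof. by move=> mu [Hmu _]; split; [exact: Hmu.1 | exact: occM_sum]. Qed.

Lemma feasF_convex : convex_set F.
Proof.
move=> x y t [[x0 xf] xb] [[y0 yf] yb] t0 t1; have t1' : 0 <= 1 - t by rewrite subr_ge0.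
split; [split|].
- by move=> p; rewrite addr_ge0 // mulr_ge0.
- move=> s'; have := dot_lincombr (flow_col s') x y t (1 - t).
  by rewrite /Defs.dot /flow_col => ->; rewrite xf yf; ring.
- move=> i; rewrite dot_lincombr.
  by have := ler_wpM2l t0 (xb i); have := ler_wpM2l t1' (yb i); lra.
Qed.

Lemma Uspan_orth u mu mu' : Uspan P gamma u -> occM P gamma nu0 mu ->
  occM P gamma nu0 mu' -> dot u (vsub mu' mu) = 0.
Proof.
move=> [v ->] [_ Hmu] [_ Hmu']; rewrite dot_suml big1 // => s' _.
transitivity (v s' * (\sum_p EmgP P gamma p s' * mu' p - \sum_p EmgP P gamma p s' * mu p)).
  by rewrite -sumrB mulr_sumr /Defs.dot; apply: eq_bigr => p _; rewrite /vsub; ring.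
by rewrite Hmu Hmu' subrr mulr0.
Qed.

Lemma cones_Uspan y z : cone_of (fun _ => True) flow_col y ->
  cone_of (fun _ => True) (fun s' p => - flow_col s' p) z ->
  Uspan P gamma (fun p => y p + z p).
Proof.
move=> [l1 [_ [_ ->]]] [l2 [_ [_ ->]]]; exists (fun s' => l1 s' - l2 s').
by apply/funext => p; rewrite -big_split /=; apply: eq_bigr => s' _; rewrite /flow_col; ring.
Qed.

(* A direction satisfying the linearized constraints at [muE] (flow
   conservation, active constraints, active nonnegativity) is feasible:
   inactive constraints have slack for a small enough step. *)
Lemma linearized_feasible muE d : F muE ->
  (forall s', dot (flow_col s') d = 0) ->
  (forall i, dot (Psi i) muE = b i -> dot (Psi i) d <= 0) ->
  (forall q, muE q = 0 -> 0 <= d q) -> feasible_dir F muE d.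
Proof.
move=> [[muE0 Hflow] Hb] Hfl Hact Hzero.
pose Q := sum_case (fun i s => dot (Psi i) muE + s * dot (Psi i) d <= b i)
                   (fun q s => 0 <= muE q + s * d q).
have HQ (j : 'I_k + ('I_n * 'I_m)) :
    exists2 s0, 0 < s0 & forall s, 0 < s -> s <= s0 -> Q j s.
  case: j => [i|q] /=.
    case: (pselect (dot (Psi i) muE = b i)) => [act|inact].
      exists 1 => // s s0 _; rewrite act gerDl.
      by apply: mulr_ge0_le0; [exact: ltW | exact: Hact].
    have slack : 0 < b i - dot (Psi i) muE.
      by rewrite subr_gt0 lt_neqAle Hb andbT; apply/eqP.
    have [s1 s10 H1] := small_step_lin (dot (Psi i) d) slack.
    by exists s1 => // s s0 ss1; have := H1 _ s0 ss1; lra.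
  case: (pselect (muE q = 0)) => [zero|pos].
    exists 1 => // s s0 _; rewrite zero add0r.
    by apply: mulr_ge0; [exact: ltW | exact: Hzero].
  have slack : 0 < muE q by rewrite lt_neqAle eq_sym muE0 andbT; apply/eqP.
  have [s1 s10 H1] := small_step_lin (- d q) slack.
  by exists s1 => // s s0 ss1; have := H1 _ s0 ss1; rewrite mulrN; lra.
have [s s0 Hs] := small_step_fin HQ.
exists s => //; split; [split|].
- by move=> p; have := Hs (inr p).
- move=> s'; change (dot (flow_col s') (fun p => muE p + s * d p) = (1 - gamma) * nu0 s').
  by rewrite dot_addZr Hfl mulr0 addr0; exact: Hflow.
- by move=> i; rewrite dot_addZr; have := Hs (inl i).
Qed.

End OccupancyPolytope.

Section OptimalRewards.
Variables (R : realType) (n m k : nat) (P : 'I_n * 'I_m -> 'I_n -> R)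
  (nu0 : 'I_n -> R) (gamma : R) (Psi : 'I_k -> vec R n m) (b : 'I_k -> R)
  (X : set (vec R n m)) (f : vec R n m -> R) (muE : vec R n m).
Hypotheses (HP : transition_law P) (Hnu0 : simplexS nu0) (Hgamma1 : gamma < 1)
  (HXv : convex_set X) (HXD : @simplexSA R n m `<=` X) (Hfv : convex_on X f).
Local Notation vec := (vec R n m).
Local Notation dot := (@dot R n m).
Local Notation F := (feasF P gamma nu0 Psi b).
Local Notation normal_sum :=
  (msum4 (subdiff X f muE) (Uspan P gamma) (Ccone Psi b muE) (Econe muE)).

(* Generators of the polar of the linearized feasible cone at [muE]: the
   columns of [E - gamma P] with both signs, the constraint vectors [Psi i],
   and the negated unit vectors; [kkt_active] selects the active ones. *)
Definition kkt_gen : ('I_n + 'I_n) + ('I_k + 'I_n * 'I_m) -> vec :=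
  sum_case (sum_case (flow_col P gamma) (fun s' p => - flow_col P gamma s' p))
           (sum_case Psi (fun q p => - unit_vec R q p)).
Definition kkt_active : ('I_n + 'I_n) + ('I_k + 'I_n * 'I_m) -> Prop :=
  sum_case (sum_case (fun _ => True) (fun _ => True))
           (sum_case (fun i => dot (Psi i) muE = b i) (fun q => muE q = 0)).

Lemma normal_sum_RL r : F muE -> normal_sum r -> RL F f r muE.
Proof.
move=> HE [g [u [c [e [Hg [Hu [Hc [He ->]]]]]]]]; split => // mu Fmu.
have Hgm := Hg mu (feas_sub_dom HXD (feasF_simplex HP Hnu0 Hgamma1) Fmu).
have u0 := Uspan_orth Hu HE.1 Fmu.1.
have c_le0 : dot c (vsub mu muE) <= 0.
  by apply: (cone_of_nonpos Hc) => i act; rewrite /vsub dotBr act subr_le0; exact: Fmu.2.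
have e_le0 : dot e (vsub mu muE) <= 0.
  apply: (cone_of_nonpos He) => q zero.
  by rewrite dotNl dot_unit /vsub zero subr0 oppr_le0; exact: Fmu.1.1.
move: Hgm u0 c_le0 e_le0; rewrite !dotDl /vsub !dotBr; lra.
Qed.

(* Necessity (KKT conditions): under Slater's condition, optimality of [muE]
   produces a Lagrange multiplier, which Farkas' lemma decomposes along the
   active constraints. *)
Lemma RL_normal_sum r :
  (exists mu0, F mu0 /\ relint X mu0) -> RL F f r muE -> normal_sum r.
Proof.
move=> Hslater [HE Hopt].
pose phi x := f x - dot r x.
have Hphi : convex_on X phi.
  by move=> x y t Xx Xy t0 t1; rewrite /phi dot_lincombr; have := Hfv Xx Xy t0 t1; lra.
have Hmin mu : F mu -> phi muE <= phi mu by move=> /Hopt; rewrite /phi; lra.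
have HFv : convex_set F by exact: feasF_convex.
have HFS : F `<=` @simplexSA R n m := feasF_simplex HP Hnu0 Hgamma1.
have [lam [Hsub Hdir]] := lagrange_multiplier HXv HFv HXD HFS Hphi HE Hmin Hslater.
have : cone_of kkt_active kkt_gen (fun p => - lam p).
  apply: farkas_cone => x Hx; rewrite dotNl oppr_le0; apply/Hdir/linearized_feasible => //.
  - move=> s'; apply/eqP; rewrite eq_le (Hx (inl (inl s'))) //=.
    by have := Hx (inl (inr s')) I; rewrite /= dotNl oppr_le0.
  - by move=> i act; exact: (Hx (inr (inl i))).
  - by move=> q zero; have := Hx (inr (inr q)) zero; rewrite /= dotNl dot_unit oppr_le0.
move=> /cone_of_sum [u [ce [/cone_of_sum [u1 [u2 [Hu1 Hu2 ->]]]
  /cone_of_sum [c [e [Hc He ->]]] Elam]]].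
exists (fun p => r p + lam p), (fun p => u1 p + u2 p), c, e; split.
  move=> x Xx; have := Hsub x Xx; rewrite /vsub dotDl /phi !dotBr; lra.
split; first exact: cones_Uspan.
do 2 split => //; apply/funext => p.
by have /= := congr1 (fun h => h p) Elam; lra.
Qed.

End OptimalRewards.

Lemma simplex_dot_le (R : realType) (n m : nat) (w mu : vec R n m) :
  simplexSA mu -> dot w mu <= \sum_p `|w p|.
Proof.
move=> [mu0 mu_sum]; apply: ler_sum => p _.
have mu1 : mu p <= 1.
  by rewrite -mu_sum (bigD1 p) //= lerDl sumr_ge0.
apply: (le_trans (ler_wpM2r (mu0 p) (ler_norm (w p)))).
by rewrite -[leRHS]mulr1 ler_wpM2l.
Qed.

Section InverseRL.
Variables (R : realType) (n m : nat) (F : set (vec R n m)) (f : vec R n m -> R).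
Variable muE : vec R n m.
Hypothesis HE : F muE.
Local Notation vec := (vec R n m).
Local Notation dot := (@dot R n m).
Local Notation irl_values r := [set dot r (vsub mu muE) - f mu | mu in F].

Lemma irl_value_muE (r : vec) : dot r (vsub muE muE) - f muE = - f muE.
Proof. by rewrite /vsub dotBr subrr sub0r. Qed.

Lemma irl_obj_RL r : RL F f r muE -> irl_obj F f muE r = - f muE.
Proof.
move=> [_ Hopt]; have ub : ubound (irl_values r) (- f muE).
  by move=> _ [mu Fmu <-]; rewrite /vsub dotBr; have := Hopt mu Fmu; lra.
apply/eqP; rewrite eq_le; apply/andP; split.
  by apply: ge_sup ub; exists (- f muE), muE; rewrite ?irl_value_muE.
by apply: (ub_le_sup (ex_intro _ _ ub)); exists muE; rewrite ?irl_value_muE.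
Qed.

(* Hence, when some reward makes [muE] optimal, the IRL minimizers are exactly
   such rewards: any other reward has some objective term above [- f muE]. *)
Lemma IRL_RL : (forall r, has_ubound (irl_values r)) ->
  (exists rE, RL F f rE muE) -> IRL F f muE = [set r | RL F f r muE].
Proof.
move=> Hub [rE HrE]; apply/seteqP; split => r.
  move=> /(_ rE); rewrite (irl_obj_RL HrE) => Hr; split => // mu Fmu.
  have : dot r (vsub mu muE) - f mu <= irl_obj F f muE r.
    by apply: ub_le_sup (Hub r) _ _; exists mu.
  rewrite /vsub dotBr; lra.
move=> /irl_obj_RL Hr r'; rewrite Hr.
by apply: ub_le_sup (Hub r') _ _; exists muE; rewrite ?irl_value_muE.
Qed.

Lemma irl_values_bounded (X : set vec) (g0 : vec) :
  F `<=` @simplexSA R n m -> @simplexSA R n m `<=` X -> subdiff X f muE g0 ->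
  forall r, has_ubound (irl_values r).
Proof.
move=> HFS HXD Hg0 r; pose w p := r p - g0 p.
exists (\sum_p `|w p| - dot w muE - f muE) => _ [mu Fmu <-].
have Hg := Hg0 mu (HXD _ (HFS _ Fmu)).
have Hw := simplex_dot_le w (HFS _ Fmu).
move: Hg Hw; rewrite !dotBl /vsub !dotBr; lra.
Qed.

End InverseRL.

Theorem corollary4p6 (R : realType) (n m k : nat) (Hm : (1 < m)%N)
  (P : 'I_n * 'I_m -> 'I_n -> R) (nu0 : 'I_n -> R) (gamma : R)
  (Psi : 'I_k -> vec R n m) (b : 'I_k -> R)
  (X : set (vec R n m)) (f : vec R n m -> R)
  (HP : transition_law P) (Hnu0 : simplexS nu0)
  (Hgamma0 : 0 < gamma) (Hgamma1 : gamma < 1)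
  (HXc : closed_set X) (HXv : convex_set X) (HXD : @simplexSA R n m `<=` X)
  (Hfc : continuous_on X f) (Hfv : convex_on X f)
  (muE : vec R n m)
  (Hslater : exists mu, feasF P gamma nu0 Psi b mu /\ relint X mu)
  (Hreal : exists rE : vec R n m, RL (feasF P gamma nu0 Psi b) f rE muE) :
  IRL (feasF P gamma nu0 Psi b) f muE =
  msum4 (subdiff X f muE) (Uspan P gamma) (Ccone Psi b muE) (Econe muE).
Proof.
have [rE HrE] := Hreal; have HE := HrE.1.
have HFS := @feasF_simplex R n m k P nu0 gamma Psi b HP Hnu0 Hgamma1.
(* The realizing reward gives a subgradient of [f] at [muE], hence finiteness. *)
have [g0 [_ [_ [_ [Hg0 _]]]]] := RL_normal_sum HP Hnu0 Hgamma1 HXv HXD Hfv Hslater HrE.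
rewrite (IRL_RL HE (irl_values_bounded HFS HXD Hg0) Hreal).
apply/seteqP; split => r /= Hr.
  exact: (RL_normal_sum HP Hnu0 Hgamma1 HXv HXD Hfv Hslater Hr).
exact: (normal_sum_RL HP Hnu0 Hgamma1 HXD HE Hr).
Qed.
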